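(* For every 3-periodic of the elliptic billiard, the interior angles $\theta^\dagger_{1,i}$ ($i=1,2,3$) of its $f_1$-inversive triangle satisfy $$\sum_{i=1}^3\cos\theta^\dagger_{1,i}=\frac{\delta\,(a^2+c^2-\delta)}{a^2c^2},\qquad \delta=\sqrt{a^4-a^2b^2+b^4}.$$
   Context: The elliptic billiard is $\mathcal{E}: x^2/a^2+y^2/b^2=1$, $a>b>0$, $c=\sqrt{a^2-b^2}$, with focus $f_1=(-c,0)$. A 3-periodic is a triangle $P_1P_2P_3$ inscribed in $\mathcal{E}$ that is a closed billiard trajectory (at each vertex the normal to $\mathcal{E}$ bisects the angle between the two incident sides). The $f_1$-inversive triangle has vertices $P^\dagger_{1,i}=f_1+\rho^2\,(P_i-f_1)/|P_i-f_1|^2$, the inversions of the $P_i$ in a circle of radius $\rho>0$ centered at $f_1$ (its angles do not depend on $\rho$). *)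

From Stdlib Require Import Reals Lra.
Open Scope R_scope.

Definition pt := (R * R)%type.

Definition vsub (p q : pt) : pt := (fst p - fst q, snd p - snd q).
Definition dot (u v : pt) : R := fst u * fst v + snd u * snd v.
Definition cross (u v : pt) : R := fst u * snd v - snd u * fst v.
Definition vnorm (u : pt) : R := sqrt (dot u u).
Definition vscale (k : R) (u : pt) : pt := (k * fst u, k * snd u).
Definition vadd (u v : pt) : pt := (fst u + fst v, snd u + snd v).
Definition unitv (u : pt) : pt := vscale (/ vnorm u) u.

Definition on_ellipse (a b : R) (p : pt) : Prop :=
  (fst p)^2 / a^2 + (snd p)^2 / b^2 = 1.

Definition ell_normal (a b : R) (p : pt) : pt := (fst p / a^2, snd p / b^2).

(* Billiard reflection at vertex p with neighbours q, r: the normal line at p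
   bisects the angle q p r, i.e. the sum of the unit vectors along the two
   incident sides is parallel to the normal. *)
Definition bisects_normal (a b : R) (q p r : pt) : Prop :=
  cross (vadd (unitv (vsub q p)) (unitv (vsub r p))) (ell_normal a b p) = 0.

Definition three_periodic (a b : R) (P1 P2 P3 : pt) : Prop :=
  on_ellipse a b P1 /\ on_ellipse a b P2 /\ on_ellipse a b P3 /\
  P1 <> P2 /\ P2 <> P3 /\ P3 <> P1 /\
  bisects_normal a b P3 P1 P2 /\
  bisects_normal a b P1 P2 P3 /\
  bisects_normal a b P2 P3 P1.

Definition invert (f : pt) (rho : R) (p : pt) : pt :=
  vadd f (vscale (rho^2 / (dot (vsub p f) (vsub p f))) (vsub p f)).

Definition angle_at (q p r : pt) : R :=
  acos (dot (vsub q p) (vsub r p) / (vnorm (vsub q p) * vnorm (vsub r p))).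

From Stdlib Require Import Reals Lra Nsatz.
Open Scope R_scope.

(* Vertices are written in eccentric-angle form P_i = (a C_i, b S_i) with C_i^2 + S_i^2 = 1.  For
   two vertices let gap_ij = 1 - cos(t_i - t_j) and weight_ij = a^2 (1 - cos(t_i + t_j))
   + b^2 (1 + cos(t_i + t_j)), so that |P_i P_j|^2 = gap_ij weight_ij.

   1. Reflection law.  A side through P_i makes an angle with the normal at P_i whose squared
      cosine is gap/weight, so the reflection law equates gap/weight on the two sides at P_i.
      Hence lam weight_ij = a^2 b^2 gap_ij for a single lam > 0: all three sides touch the
      confocal conic with parameter lam (the caustic).
   2. Cayley's condition.  For a triangle on the unit circle whose sides satisfy one bilinear
      tangency relation, its coefficients satisfy a quadratic relation.  This determines
      lam = a^2 b^2 (2 delta - a^2 - b^2)/c^4, and the caustic semi-axis al = sqrt(a^2 - lam)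
      equals a (delta - b^2)/c^2.
   3. Inversion about f1 = (-c, 0) maps |P_i P_j| to rho^2 |P_i P_j|/(r_i r_j), with focal radii
      r_i = a + c C_i.  By step 1 the inversive triangle has sides proportional to
      L_k = gap_ij r_k ({i, j, k} = {1, 2, 3}).
   4. Vertex identities.  The tangency relation is linear in the second vertex, so the other two
      vertices are the intersections of a line with the unit circle.  Eliminating them gives
      cos theta_i = (a (a - c C_i) - lam)/(al (a - c C_i)), and sum_i 1/(a - c C_i) is an
      explicit constant.
   5. Summing the three cosines and substituting lam and al yields the closed form. *)

Ltac nsatz_pow := cbn [pow] in *; nsatz.

Lemma ellipse_param (a b x y : R) : 0 < a -> 0 < b -> x^2/a^2 + y^2/b^2 = 1 ->
  exists C S, x = a*C /\ y = b*S /\ C^2 + S^2 = 1.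
Proof.
  intros Ha Hb H. exists (x/a), (y/b).
  split; [field; lra|]. split; [field; lra|].
  rewrite <- H. field. split; lra.
Qed.

(* For (C_i, S_i) = (cos t_i, sin t_i): gap = 1 - cos(t_i - t_j) and
   weight = a^2 (1 - cos(t_i + t_j)) + b^2 (1 + cos(t_i + t_j)). *)
Definition gap (Ci Si Cj Sj : R) : R := 1 - (Ci*Cj + Si*Sj).
Definition weight (a b Ci Si Cj Sj : R) : R :=
  a^2*(1 - (Ci*Cj - Si*Sj)) + b^2*(1 + (Ci*Cj - Si*Sj)).

Lemma gap_sym (Ci Si Cj Sj : R) : gap Ci Si Cj Sj = gap Cj Sj Ci Si.
Proof. unfold gap. ring. Qed.

Lemma weight_sym (a b Ci Si Cj Sj : R) : weight a b Ci Si Cj Sj = weight a b Cj Sj Ci Si.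
Proof. unfold weight. ring. Qed.

(* Twice the gap is the squared distance of the parameters, so distinct parameters have
   positive gap. *)
Lemma gap_pos (Ci Si Cj Sj : R) : Ci^2 + Si^2 = 1 -> Cj^2 + Sj^2 = 1 ->
  (Ci, Si) <> (Cj, Sj) -> 0 < gap Ci Si Cj Sj.
Proof.
  intros Hi Hj Hneq.
  assert (Hcirc : 2 * gap Ci Si Cj Sj = (Cj - Ci)^2 + (Sj - Si)^2) by (unfold gap; nra).
  destruct (Rlt_or_le 0 (gap Ci Si Cj Sj)) as [|Hle]; [assumption|].
  pose proof (pow2_ge_0 (Cj - Ci)). pose proof (pow2_ge_0 (Sj - Si)).
  exfalso. apply Hneq. f_equal; nra.
Qed.

(* The weight is a convex combination of 2 a^2 and 2 b^2, since |cos(t_i + t_j)| <= 1. *)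
Lemma weight_pos (a b Ci Si Cj Sj : R) : 0 < a -> 0 < b ->
  Ci^2 + Si^2 = 1 -> Cj^2 + Sj^2 = 1 -> 0 < weight a b Ci Si Cj Sj.
Proof.
  intros Ha Hb Hi Hj. unfold weight.
  set (x := Ci*Cj - Si*Sj).
  assert (Hx : x^2 + (Ci*Sj + Si*Cj)^2 = 1) by (unfold x; nsatz_pow).
  pose proof (pow2_ge_0 (Ci*Sj + Si*Cj)).
  assert (0 <= 1 - x /\ 0 <= 1 + x) as [Hl Hr] by (split; nra).
  assert (0 < a^2 /\ 0 < b^2) as [Ha2 Hb2] by (split; apply pow_lt; lra).
  destruct (Rle_or_lt x 0); nra.
Qed.

Lemma chord_sq (a b Ci Si Cj Sj : R) : Ci^2 + Si^2 = 1 -> Cj^2 + Sj^2 = 1 ->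
  dot (vsub (a*Cj, b*Sj) (a*Ci, b*Si)) (vsub (a*Cj, b*Sj) (a*Ci, b*Si))
  = gap Ci Si Cj Sj * weight a b Ci Si Cj Sj.
Proof. unfold dot, vsub, gap, weight. cbn [fst snd]. intros. nsatz_pow. Qed.

Lemma chord_normal (a b Ci Si Cj Sj : R) : 0 < a -> 0 < b -> Ci^2 + Si^2 = 1 ->
  dot (vsub (a*Cj, b*Sj) (a*Ci, b*Si)) (ell_normal a b (a*Ci, b*Si)) = - gap Ci Si Cj Sj.
Proof.
  unfold dot, vsub, ell_normal, gap. cbn [fst snd]. intros Ha Hb Hi.
  transitivity (Ci*Cj + Si*Sj - (Ci^2 + Si^2)); [field; lra | rewrite Hi; ring].
Qed.

Lemma bisector_equal_angles (u w n : pt) : dot u u = 1 -> dot w w = 1 ->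
  cross (vadd u w) n = 0 -> (dot u n)^2 = (dot w n)^2.
Proof.
  destruct u as [u1 u2], w as [w1 w2], n as [n1 n2].
  unfold dot, cross, vadd. cbn [fst snd]. intros. nsatz_pow.
Qed.

Lemma unitv_dot (u n : pt) : 0 < dot u u ->
  dot (unitv u) (unitv u) = 1 /\ (dot (unitv u) n)^2 = (dot u n)^2 / dot u u.
Proof.
  intro Hu.
  assert (Hs : sqrt (dot u u) * sqrt (dot u u) = dot u u) by (apply sqrt_sqrt; lra).
  assert (Hp : 0 < sqrt (dot u u)) by (apply sqrt_lt_R0; assumption).
  unfold unitv, vnorm.
  set (r := sqrt (dot u u)) in *. clearbody r.
  destruct u as [u1 u2], n as [n1 n2].
  unfold vscale, dot in *. cbn [fst snd] in *.
  split.
  - transitivity ((u1*u1 + u2*u2) / (r*r)); [field; lra | rewrite Hs; field; lra].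
  - transitivity ((u1*n1 + u2*n2)^2 / (r*r)); [field; lra | rewrite Hs; reflexivity].
Qed.

(* Reflection law at P_1: the ratio gap/weight is the same for both sides through P_1,
   because it is the squared cosine of the angle between the side and the normal. *)
Lemma reflection_ratio (a b C1 S1 C2 S2 C3 S3 : R) : 0 < a -> 0 < b ->
  C1^2 + S1^2 = 1 -> C2^2 + S2^2 = 1 -> C3^2 + S3^2 = 1 ->
  0 < gap C1 S1 C2 S2 -> 0 < gap C1 S1 C3 S3 ->
  bisects_normal a b (a*C3, b*S3) (a*C1, b*S1) (a*C2, b*S2) ->
  gap C1 S1 C2 S2 * weight a b C1 S1 C3 S3 = gap C1 S1 C3 S3 * weight a b C1 S1 C2 S2.
Proof.
  intros Ha Hb H1 H2 H3 Hg2 Hg3 Hbis.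
  pose proof (weight_pos a b C1 S1 C2 S2 Ha Hb H1 H2) as Hw2.
  pose proof (weight_pos a b C1 S1 C3 S3 Ha Hb H1 H3) as Hw3.
  set (n := ell_normal a b (a*C1, b*S1)).
  assert (Hd2 : 0 < dot (vsub (a*C2, b*S2) (a*C1, b*S1)) (vsub (a*C2, b*S2) (a*C1, b*S1)))
    by (rewrite chord_sq by assumption; nra).
  assert (Hd3 : 0 < dot (vsub (a*C3, b*S3) (a*C1, b*S1)) (vsub (a*C3, b*S3) (a*C1, b*S1)))
    by (rewrite chord_sq by assumption; nra).
  destruct (unitv_dot _ n Hd2) as [Hu2 Ha2].
  destruct (unitv_dot _ n Hd3) as [Hu3 Ha3].
  pose proof (bisector_equal_angles _ _ n Hu3 Hu2 Hbis) as Heq.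
  rewrite Ha2, Ha3, !chord_sq, !chord_normal in Heq by assumption.
  replace ((- gap C1 S1 C3 S3)^2 / (gap C1 S1 C3 S3 * weight a b C1 S1 C3 S3))
    with (gap C1 S1 C3 S3 / weight a b C1 S1 C3 S3) in Heq by (field; lra).
  replace ((- gap C1 S1 C2 S2)^2 / (gap C1 S1 C2 S2 * weight a b C1 S1 C2 S2))
    with (gap C1 S1 C2 S2 / weight a b C1 S1 C2 S2) in Heq by (field; lra).
  apply (Rmult_eq_reg_r (/ (weight a b C1 S1 C2 S2 * weight a b C1 S1 C3 S3))).
  - transitivity (gap C1 S1 C2 S2 / weight a b C1 S1 C2 S2); [field; lra|].
    rewrite <- Heq. field. lra.
  - apply Rinv_neq_0_compat. nra.
Qed.

(* Coefficients of the tangency relation: the chord P_i P_j touches the confocal conic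
   x^2/(a^2 - lam) + y^2/(b^2 - lam) = 1 exactly when
   tc1 C_i C_j + tc2 S_i S_j + tc3 = 0. *)
Definition tc1 (a b lam : R) : R := a^2*b^2 - lam*(a^2 - b^2).
Definition tc2 (a b lam : R) : R := a^2*b^2 + lam*(a^2 - b^2).
Definition tc3 (a b lam : R) : R := lam*(a^2 + b^2) - a^2*b^2.
Definition tangency (a b lam Ci Si Cj Sj : R) : R :=
  tc1 a b lam * Ci*Cj + tc2 a b lam * Si*Sj + tc3 a b lam.

Lemma tangency_eq (a b lam Ci Si Cj Sj : R) :
  tangency a b lam Ci Si Cj Sj = lam * weight a b Ci Si Cj Sj - a^2*b^2 * gap Ci Si Cj Sj.
Proof. unfold tangency, tc1, tc2, tc3, weight, gap. ring. Qed.

Lemma tangency_sym (a b lam Ci Si Cj Sj : R) :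
  tangency a b lam Ci Si Cj Sj = tangency a b lam Cj Sj Ci Si.
Proof. unfold tangency. ring. Qed.

Definition caustic_triangle (a b lam C1 S1 C2 S2 C3 S3 : R) : Prop :=
  C1^2 + S1^2 = 1 /\ C2^2 + S2^2 = 1 /\ C3^2 + S3^2 = 1 /\
  tangency a b lam C1 S1 C2 S2 = 0 /\ tangency a b lam C2 S2 C3 S3 = 0 /\
  tangency a b lam C3 S3 C1 S1 = 0 /\
  0 < gap C1 S1 C2 S2 /\ 0 < gap C2 S2 C3 S3 /\ 0 < gap C3 S3 C1 S1.

Lemma caustic_triangle_rotate (a b lam C1 S1 C2 S2 C3 S3 : R) :
  caustic_triangle a b lam C1 S1 C2 S2 C3 S3 -> caustic_triangle a b lam C2 S2 C3 S3 C1 S1.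
Proof. unfold caustic_triangle. tauto. Qed.

Lemma common_caustic (a b C1 S1 C2 S2 C3 S3 : R) : 0 < a -> 0 < b ->
  C1^2 + S1^2 = 1 -> C2^2 + S2^2 = 1 -> C3^2 + S3^2 = 1 ->
  0 < gap C1 S1 C2 S2 -> 0 < gap C2 S2 C3 S3 -> 0 < gap C3 S3 C1 S1 ->
  bisects_normal a b (a*C3, b*S3) (a*C1, b*S1) (a*C2, b*S2) ->
  bisects_normal a b (a*C1, b*S1) (a*C2, b*S2) (a*C3, b*S3) ->
  exists lam, 0 < lam /\ caustic_triangle a b lam C1 S1 C2 S2 C3 S3.
Proof.
  intros Ha Hb H1 H2 H3 Hg12 Hg23 Hg31 Hbis1 Hbis2.
  assert (Hg13 : 0 < gap C1 S1 C3 S3) by (rewrite gap_sym; assumption).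
  assert (Hg21 : 0 < gap C2 S2 C1 S1) by (rewrite gap_sym; assumption).
  pose proof (reflection_ratio a b C1 S1 C2 S2 C3 S3 Ha Hb H1 H2 H3 Hg12 Hg13 Hbis1) as R1.
  pose proof (reflection_ratio a b C2 S2 C3 S3 C1 S1 Ha Hb H2 H3 H1 Hg23 Hg21 Hbis2) as R2.
  rewrite (gap_sym C2 S2 C1 S1), (weight_sym a b C2 S2 C1 S1) in R2.
  pose proof (weight_pos a b C1 S1 C2 S2 Ha Hb H1 H2) as Hw12.
  assert (Hab : 0 < a^2*b^2) by (apply Rmult_lt_0_compat; apply pow_lt; lra).
  exists (a^2*b^2 * gap C1 S1 C2 S2 / weight a b C1 S1 C2 S2).
  split; [apply Rdiv_lt_0_compat; nra|].
  unfold caustic_triangle. rewrite !tangency_eq.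
  repeat split; try assumption.
  - field. lra.
  - apply (Rmult_eq_reg_r (weight a b C1 S1 C2 S2)); [|lra].
    transitivity (a^2*b^2 * (gap C1 S1 C2 S2 * weight a b C2 S2 C3 S3)
                  - a^2*b^2 * gap C2 S2 C3 S3 * weight a b C1 S1 C2 S2); [field; lra|].
    rewrite <- R2. ring.
  - apply (Rmult_eq_reg_r (weight a b C1 S1 C2 S2)); [|lra].
    rewrite (gap_sym C3 S3 C1 S1), (weight_sym a b C3 S3 C1 S1).
    transitivity (a^2*b^2 * (gap C1 S1 C2 S2 * weight a b C1 S1 C3 S3)
                  - a^2*b^2 * gap C1 S1 C3 S3 * weight a b C1 S1 C2 S2); [field; lra|].
    rewrite R1. ring.
Qed.

(* The polynomial identity behind Cayley's condition: the tangency forms m_ij and the circle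
   forms g_ij combine, with adjugate coefficients, into the closure expression times the
   squared determinant of the parameter triangle. *)
Lemma cayley_identity (h1 h2 h3 C1 S1 C2 S2 C3 S3 : R) :
  let m := fun Ci Si Cj Sj => h1*Ci*Cj + h2*Si*Sj + h3 in
  let g := fun Ci Si Cj Sj => Ci*Cj + Si*Sj - 1 in
  let m11 := m C1 S1 C1 S1 in let m22 := m C2 S2 C2 S2 in let m33 := m C3 S3 C3 S3 in
  let m12 := m C1 S1 C2 S2 in let m13 := m C1 S1 C3 S3 in let m23 := m C2 S2 C3 S3 in
  (h2*h3 + h1*h3 - h1*h2) * (C1*(S2 - S3) - C2*(S1 - S3) + C3*(S1 - S2))^2 =
  (m22*m33 - m23^2)*g C1 S1 C1 S1 + (m11*m33 - m13^2)*g C2 S2 C2 S2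
  + (m11*m22 - m12^2)*g C3 S3 C3 S3
  + 2*((m13*m23 - m12*m33)*g C1 S1 C2 S2 + (m12*m23 - m13*m22)*g C1 S1 C3 S3
       + (m12*m13 - m11*m23)*g C2 S2 C3 S3).
Proof. intros. unfold m11, m22, m33, m12, m13, m23, m, g. ring. Qed.

Lemma area_sq (C1 S1 C2 S2 C3 S3 : R) :
  C1^2 + S1^2 = 1 -> C2^2 + S2^2 = 1 -> C3^2 + S3^2 = 1 ->
  (C1*(S2 - S3) - C2*(S1 - S3) + C3*(S1 - S2))^2
  = 2 * gap C1 S1 C2 S2 * gap C1 S1 C3 S3 * gap C2 S2 C3 S3.
Proof. unfold gap. intros. nsatz_pow. Qed.

Lemma cayley_condition (h1 h2 h3 C1 S1 C2 S2 C3 S3 : R) :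
  C1^2 + S1^2 = 1 -> C2^2 + S2^2 = 1 -> C3^2 + S3^2 = 1 ->
  h1*C1*C2 + h2*S1*S2 + h3 = 0 -> h1*C1*C3 + h2*S1*S3 + h3 = 0 ->
  h1*C2*C3 + h2*S2*S3 + h3 = 0 ->
  0 < gap C1 S1 C2 S2 -> 0 < gap C1 S1 C3 S3 -> 0 < gap C2 S2 C3 S3 ->
  h2*h3 + h1*h3 - h1*h2 = 0.
Proof.
  intros H1 H2 H3 H12 H13 H23 Hg12 Hg13 Hg23.
  pose proof (cayley_identity h1 h2 h3 C1 S1 C2 S2 C3 S3) as E. cbv beta zeta in E.
  rewrite H12, H13, H23 in E.
  replace (C1*C1 + S1*S1 - 1) with 0 in E by nra.
  replace (C2*C2 + S2*S2 - 1) with 0 in E by nra.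
  replace (C3*C3 + S3*S3 - 1) with 0 in E by nra.
  rewrite area_sq in E by assumption.
  assert (0 < 2 * gap C1 S1 C2 S2 * gap C1 S1 C3 S3 * gap C2 S2 C3 S3)
    by (repeat apply Rmult_lt_0_compat; lra).
  apply (Rmult_eq_reg_r (2 * gap C1 S1 C2 S2 * gap C1 S1 C3 S3 * gap C2 S2 C3 S3)); [|lra].
  rewrite E. ring.
Qed.

Lemma cayley_factor (a b d lam : R) : d^2 = a^4 - a^2*b^2 + b^4 ->
  ((a^2 - b^2)^2*lam - a^2*b^2*(2*d - a^2 - b^2)) * ((a^2 - b^2)^2*lam + a^2*b^2*(2*d + a^2 + b^2))
  = (a^2 - b^2)^2 * (tc2 a b lam * tc3 a b lam + tc1 a b lam * tc3 a b lam
                     - tc1 a b lam * tc2 a b lam).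
Proof. unfold tc1, tc2, tc3. intros. nsatz_pow. Qed.

(* The caustic parameter of a 3-periodic (the second factor is positive). *)
Lemma caustic_parameter (a b d lam C1 S1 C2 S2 C3 S3 : R) :
  0 < b -> b < a -> 0 < d -> d^2 = a^4 - a^2*b^2 + b^4 -> 0 < lam ->
  caustic_triangle a b lam C1 S1 C2 S2 C3 S3 ->
  (a^2 - b^2)^2*lam = a^2*b^2*(2*d - a^2 - b^2).
Proof.
  intros Hb Hba Hd Hd2 Hl (H1 & H2 & H3 & T12 & T23 & T31 & G12 & G23 & G31).
  rewrite tangency_sym in T31. rewrite gap_sym in G31.
  pose proof (cayley_condition _ _ _ C1 S1 C2 S2 C3 S3 H1 H2 H3 T12 T31 T23 G12 G31 G23) as Hc.
  pose proof (cayley_factor a b d lam Hd2) as F. rewrite Hc, Rmult_0_r in F.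
  apply Rmult_integral in F. destruct F as [F|F]; [lra|].
  exfalso.
  assert (0 < a^2*b^2) by (apply Rmult_lt_0_compat; apply pow_lt; lra).
  assert (0 < (a^2 - b^2)^2*lam) by (apply Rmult_lt_0_compat; [apply pow_lt; nra | lra]).
  assert (0 < a^2*b^2*(2*d + a^2 + b^2)) by (apply Rmult_lt_0_compat; nra).
  lra.
Qed.

Lemma delta_bounds (a b d : R) : 0 < b -> b < a -> 0 < d -> d^2 = a^4 - a^2*b^2 + b^4 ->
  b^2 < d /\ d < a^2.
Proof.
  intros Hb Hba Hd Hd2.
  assert (0 < a^2*(a^2 - b^2) /\ 0 < b^2*(a^2 - b^2)) as [P1 P2]
    by (split; apply Rmult_lt_0_compat; nra).
  split; nra.
Qed.

Lemma caustic_axis (a b d lam : R) :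
  0 < b -> b < a -> 0 < d -> d^2 = a^4 - a^2*b^2 + b^4 ->
  (a^2 - b^2)^2*lam = a^2*b^2*(2*d - a^2 - b^2) ->
  let al := a*(d - b^2)/(a^2 - b^2) in
  0 < al /\ al < a /\ al^2 = a^2 - lam /\ (a^2 - b^2)*(al^2 - 2*a*al) = a^4 - 2*a^3*al.
Proof.
  intros Hb Hba Hd Hd2 Hlam al.
  destruct (delta_bounds a b d Hb Hba Hd Hd2) as [Hdb Hda].
  assert (Hab : 0 < a^2 - b^2) by nra.
  assert (Hal : 0 < al) by (unfold al; apply Rdiv_lt_0_compat; nra).
  assert (Hal2 : al^2 = a^2 - lam).
  { apply (Rmult_eq_reg_r ((a^2 - b^2)^2)); [|nra].
    rewrite Rmult_minus_distr_r. rewrite (Rmult_comm lam), Hlam.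
    unfold al. field_simplify; [|lra]. clear - Hd2. nsatz_pow. }
  repeat split; try assumption.
  - unfold al. apply (Rmult_lt_reg_r (a^2 - b^2)); [lra|].
    field_simplify; nra.
  - unfold al. field_simplify_eq; [clear - Hd2; nsatz_pow | lra].
Qed.

(* For the 3-periodic caustic all tangency coefficients are positive; for tc3 this follows
   from Cayley's condition tc3 (tc1 + tc2) = tc1 tc2. *)
Lemma caustic_coef_pos (a b d lam : R) :
  0 < b -> b < a -> 0 < d -> d^2 = a^4 - a^2*b^2 + b^4 -> 0 < lam ->
  (a^2 - b^2)^2*lam = a^2*b^2*(2*d - a^2 - b^2) ->
  0 < tc1 a b lam /\ 0 < tc2 a b lam /\ 0 < tc3 a b lam.
Proof.
  intros Hb Hba Hd Hd2 Hl Hlam.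
  destruct (delta_bounds a b d Hb Hba Hd Hd2) as [Hdb Hda].
  assert (Hab : 0 < a^2 - b^2) by nra.
  assert (Hab2 : 0 < a^2*b^2) by (apply Rmult_lt_0_compat; apply pow_lt; lra).
  assert (H1 : 0 < tc1 a b lam).
  { unfold tc1. apply (Rmult_lt_reg_r (a^2 - b^2)); [lra|].
    replace ((a^2*b^2 - lam*(a^2 - b^2))*(a^2 - b^2))
      with (a^2*b^2*(a^2 - b^2) - (a^2 - b^2)^2*lam) by ring.
    rewrite Hlam, Rmult_0_l. nra. }
  assert (H2 : 0 < tc2 a b lam) by (unfold tc2; nra).
  split; [assumption | split; [assumption|]].
  pose proof (cayley_factor a b d lam Hd2) as F.
  rewrite Hlam, Rminus_diag, Rmult_0_l in F.
  assert (E : tc3 a b lam * (tc1 a b lam + tc2 a b lam) = tc1 a b lam * tc2 a b lam).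
  { apply (Rmult_eq_reg_l ((a^2 - b^2)^2)); [|nra]. lra. }
  assert (0 < tc1 a b lam * tc2 a b lam) by (apply Rmult_lt_0_compat; assumption).
  nra.
Qed.

Lemma line_circle_pair (A B h C2 S2 C3 S3 : R) : 0 < A^2 + B^2 ->
  A*C2 + B*S2 + h = 0 -> A*C3 + B*S3 + h = 0 ->
  C2^2 + S2^2 = 1 -> C3^2 + S3^2 = 1 -> 0 < gap C2 S2 C3 S3 ->
  let n := A^2 + B^2 in
  exists tau, C2 = -h*A/n - tau*B /\ S2 = -h*B/n + tau*A /\
              C3 = -h*A/n + tau*B /\ S3 = -h*B/n - tau*A /\ tau^2 = (n - h^2)/n^2.
Proof.
  intros Hn L2 L3 H2 H3 Hg n. assert (Hn' : 0 < n) by exact Hn.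
  set (t := fun C S => (-B*C + A*S)/n).
  assert (Hdec : forall C S, A*C + B*S + h = 0 ->
            C = -h*A/n - t C S * B /\ S = -h*B/n + t C S * A).
  { intros C S L. unfold t, n. replace h with (-(A*C + B*S)) by lra. split; field; lra. }
  assert (Hsq : forall C S, A*C + B*S + h = 0 -> C^2 + S^2 = 1 -> (t C S)^2 = (n - h^2)/n^2).
  { intros C S L H. destruct (Hdec C S L) as [EC ES].
    set (u := t C S) in *. clearbody u.
    rewrite EC, ES in H. apply (Rmult_eq_reg_r n); [|lra].
    transitivity (1 - h^2/n); [|field; lra]. rewrite <- H. unfold n. field. lra. }
  destruct (Hdec C2 S2 L2) as [EC2 ES2]. destruct (Hdec C3 S3 L3) as [EC3 ES3].
  pose proof (Hsq C2 S2 L2 H2) as T2. pose proof (Hsq C3 S3 L3 H3) as T3.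
  set (t2 := t C2 S2) in *. set (t3 := t C3 S3) in *. clearbody t2 t3.
  assert (Hopp : t3 = - t2).
  { assert (E : (t3 - t2) * (t3 + t2) = 0) by nra.
    destruct (Rmult_integral _ _ E) as [E'|E']; [|lra].
    exfalso. assert (C3 = C2 /\ S3 = S2) as [-> ->]
      by (rewrite EC3, ES3, EC2, ES2; split; f_equal; f_equal; lra).
    unfold gap in Hg. nra. }
  exists t2. rewrite Hopp in EC3, ES3.
  repeat split; try assumption; lra.
Qed.

(* The tangency relation through a vertex is a genuine line. *)
Lemma polar_norm_pos (h1 h2 C S : R) : 0 < h1 -> 0 < h2 -> C^2 + S^2 = 1 ->
  0 < (h1*C)^2 + (h2*S)^2.
Proof.
  intros H1 H2 H.
  assert (0 < h1^2 /\ 0 < h2^2) as [P1 P2] by (split; apply pow_lt; lra).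
  replace ((h1*C)^2 + (h2*S)^2) with (h1^2*C^2 + h2^2*S^2) by ring.
  pose proof (pow2_ge_0 C). pose proof (pow2_ge_0 S).
  destruct (Rle_or_lt (C^2) (1/2)); nra.
Qed.

(* Nonvanishing passes from a quotient to its numerator; used to discharge the side
   conditions that [field] produces after eliminating variables. *)
Lemma ne0_of_quotient (x y d : R) : x <> 0 -> d <> 0 -> x = y/d -> y <> 0.
Proof. intros Hx Hd E Hy. apply Hx. rewrite E, Hy. field. assumption. Qed.

(* Elimination identity behind [vertex_cosine]: with c^2 = k and the tangency coefficients
   expressed through al, X = c C_1, S2 = S_1^2, and the other two vertices written as
   foot -+ tau * direction with tau^2 = sg, the law-of-cosines relation is rational. *)
Lemma vertex_cosine_core (a al X k h1 h2 h3 S2 n2 p r sg qq ss qs W : R) :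
  al^2 - 2*a*al <> 0 -> a^4 - 2*a^3*al <> 0 -> n2 <> 0 ->
  k = (a^4 - 2*a^3*al)/(al^2 - 2*a*al) ->
  h1 = a^2*(a^2 - k) - (a^2 - al^2)*k ->
  h2 = a^2*(a^2 - k) + (a^2 - al^2)*k ->
  h3 = (a^2 - al^2)*(a^2 + (a^2 - k)) - a^2*(a^2 - k) ->
  S2 = 1 - X^2/k -> n2 = h1^2*X^2/k + h2^2*S2 ->
  p = 1 + h3*(h1*X^2/k + h2*S2)/n2 -> r = a - h3*h1*X/n2 -> sg = (n2 - h3^2)/n2^2 ->
  qq = (h1 - h2)^2*X^2*S2/k -> ss = k*h2^2*S2 -> qs = -(h1 - h2)*h2*X*S2 ->
  W = S2*(k*h2^2*p^2 - 2*h2*p*(h1 - h2)*X*r + (h1 - h2)^2*X^2*r^2/k) ->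
  al*(a - X)*(2*((p*r + sg*qs)^2 + sg*W) - (2*sg*n2*(a + X))^2)
  = 2*(a*(a - X) - (a^2 - al^2))*((p^2 - sg*qq)*(r^2 - sg*ss)).
Proof.
  intros HD HN Hn2 -> -> -> -> -> -> -> -> -> -> -> -> ->.
  field. repeat split; try assumption.
  apply (ne0_of_quotient _ _ ((al^2 - 2*a*al)^2*(a^4 - 2*a^3*al)) Hn2).
  - apply Rmult_integral_contrapositive_currified; [apply pow_nonzero|]; assumption.
  - field. split; assumption.
Qed.

(* Elimination identity behind [focal_reciprocal_sum], in the same variables. *)
Lemma focal_sum_core (a al X k h1 h2 h3 S2 n2 sg ss rr : R) :
  al^2 - 2*a*al <> 0 -> a^4 - 2*a^3*al <> 0 -> n2 <> 0 -> h1 <> 0 -> h3 <> 0 -> a <> 0 ->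
  k = (a^4 - 2*a^3*al)/(al^2 - 2*a*al) ->
  h1 = a^2*(a^2 - k) - (a^2 - al^2)*k ->
  h2 = a^2*(a^2 - k) + (a^2 - al^2)*k ->
  h3 = (a^2 - al^2)*(a^2 + (a^2 - k)) - a^2*(a^2 - k) ->
  S2 = 1 - X^2/k -> n2 = h1^2*X^2/k + h2^2*S2 ->
  sg = (n2 - h3^2)/n2^2 -> ss = k*h2^2*S2 -> rr = a + h3*h1*X/n2 ->
  (rr^2 - sg*ss) + (a - X)*(2*rr)
  = (3 + 2*(a^2 - al^2)*(k/h1 + a^2/h3))/(2*a)*((a - X)*(rr^2 - sg*ss)).
Proof.
  intros HD HN Hn2 Hh1 Hh3 Ha -> -> -> -> -> -> -> -> ->.
  field. repeat split; try assumption.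
  all: first
    [ apply (ne0_of_quotient _ _ ((al^2 - 2*a*al)^2*(a^4 - 2*a^3*al)) Hn2);
      [apply Rmult_integral_contrapositive_currified; [apply pow_nonzero|]; assumption
      | field; split; assumption]
    | apply (ne0_of_quotient _ _ (al^2 - 2*a*al) Hh1); [assumption | field; assumption]
    | apply (ne0_of_quotient _ _ (al^2 - 2*a*al) Hh3); [assumption | field; assumption] ].
Qed.

Lemma caustic_elimination (a b c lam al : R) :
  c^2 = a^2 - b^2 -> al^2 = a^2 - lam -> c^2*(al^2 - 2*a*al) = a^4 - 2*a^3*al ->
  al^2 - 2*a*al <> 0 ->
  c^2 = (a^4 - 2*a^3*al)/(al^2 - 2*a*al) /\
  tc1 a b lam = a^2*(a^2 - c^2) - (a^2 - al^2)*c^2 /\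
  tc2 a b lam = a^2*(a^2 - c^2) + (a^2 - al^2)*c^2 /\
  tc3 a b lam = (a^2 - al^2)*(a^2 + (a^2 - c^2)) - a^2*(a^2 - c^2).
Proof.
  intros Hcb Hlam Hax HD. unfold tc1, tc2, tc3.
  replace (b^2) with (a^2 - c^2) by lra. replace lam with (a^2 - al^2) by lra.
  repeat split; try ring. rewrite <- Hax. field. assumption.
Qed.

(* The law-of-cosines relation at P_1 between the scaled sides L_k of the inversive
   triangle. *)
Lemma vertex_cosine (a b c lam al C1 S1 C2 S2 C3 S3 : R) :
  0 < a -> 0 < c -> c^2 = a^2 - b^2 -> 0 < al -> al < a -> al^2 = a^2 - lam ->
  c^2*(al^2 - 2*a*al) = a^4 - 2*a^3*al ->
  0 < tc1 a b lam -> 0 < tc2 a b lam -> 0 < tc3 a b lam ->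
  C1^2 + S1^2 = 1 -> C2^2 + S2^2 = 1 -> C3^2 + S3^2 = 1 ->
  tangency a b lam C1 S1 C2 S2 = 0 -> tangency a b lam C1 S1 C3 S3 = 0 ->
  0 < gap C2 S2 C3 S3 ->
  let L1 := gap C2 S2 C3 S3 * (a + c*C1) in
  let L2 := gap C1 S1 C3 S3 * (a + c*C2) in
  let L3 := gap C1 S1 C2 S2 * (a + c*C3) in
  al*(a - c*C1)*(L2^2 + L3^2 - L1^2) = 2*(a*(a - c*C1) - lam)*(L2*L3).
Proof.
  intros Ha Hc Hcb Hal Hala Hlam Hax Hh1 Hh2 Hh3 H1 H2 H3 T12 T13 G23 L1 L2 L3.
  unfold tangency in T12, T13.
  assert (HD : al^2 - 2*a*al < 0) by nra.
  assert (HN : a^4 - 2*a^3*al < 0) by (rewrite <- Hax; assert (0 < c^2) by nra; nra).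
  destruct (caustic_elimination a b c lam al Hcb Hlam Hax) as (Ek & E1 & E2 & E3); [lra|].
  set (h1 := tc1 a b lam) in *. set (h2 := tc2 a b lam) in *. set (h3 := tc3 a b lam) in *.
  set (A := h1*C1). set (B := h2*S1). set (n2 := A^2 + B^2).
  assert (Hn2 : 0 < n2) by (apply polar_norm_pos; assumption).
  destruct (line_circle_pair A B h3 C2 S2 C3 S3 Hn2) as (tau & EC2 & ES2 & EC3 & ES3 & Htau);
    try (unfold A, B; lra); try assumption.
  fold n2 in EC2, ES2, EC3, ES3, Htau.
  unfold L1, L2, L3. clear L1 L2 L3.
  rewrite EC2, ES2, EC3, ES3 in *. clear EC2 ES2 EC3 ES3 T12 T13 H2 H3.
  (* with P2, P3 = foot -+ tau * direction, the gaps from P1 and the radii are affine in tau *)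
  set (p := 1 + h3*(A*C1 + B*S1)/n2). set (q := -B*C1 + A*S1).
  set (r := a - c*h3*A/n2). set (s := -c*B). set (sg := (n2 - h3^2)/n2^2) in Htau |- *.
  assert (E13 : gap C1 S1 (-h3*A/n2 + tau*B) (-h3*B/n2 - tau*A) = p + tau*q)
    by (unfold gap, p, q; field; lra).
  assert (E12 : gap C1 S1 (-h3*A/n2 - tau*B) (-h3*B/n2 + tau*A) = p - tau*q)
    by (unfold gap, p, q; field; lra).
  assert (E23 : gap (-h3*A/n2 - tau*B) (-h3*B/n2 + tau*A) (-h3*A/n2 + tau*B) (-h3*B/n2 - tau*A)
                = 2*sg*n2).
  { transitivity (1 - h3^2/n2 + tau^2*n2); [unfold gap, n2 in *; field; lra|].
    rewrite Htau. unfold sg. field. lra. }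
  assert (D2 : a + c*(-h3*A/n2 - tau*B) = r + tau*s) by (unfold r, s; field; lra).
  assert (D3 : a + c*(-h3*A/n2 + tau*B) = r - tau*s) by (unfold r, s; field; lra).
  rewrite E13, E12, E23, D2, D3.
  assert (Hcore : al*(a - c*C1)*(2*((p*r + sg*(q*s))^2 + sg*(p*s + q*r)^2) - (2*sg*n2*(a + c*C1))^2)
      = 2*(a*(a - c*C1) - (a^2 - al^2))*((p^2 - sg*q^2)*(r^2 - sg*s^2))).
  { apply (vertex_cosine_core a al (c*C1) (c^2) h1 h2 h3 (S1^2) n2 p r sg (q^2) (s^2) (q*s)
             ((p*s + q*r)^2)); try lra; try reflexivity.
    - replace ((c*C1)^2/c^2) with (C1^2) by (field; lra). lra.
    - unfold n2, A, B. field. lra.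
    - unfold p, A, B. field. split; lra.
    - unfold r, A. field. lra.
    - unfold q, A, B. field. lra.
    - unfold s, B. ring.
    - unfold q, s, A, B. ring.
    - unfold s, q, A, B. field. lra. }
  replace lam with (a^2 - al^2) by lra. rewrite <- Htau in Hcore |- *.
  apply Rminus_diag_uniq.
  match type of Hcore with ?X = ?Y => transitivity (X - Y); [ring | lra] end.
Qed.

Lemma focal_reciprocal_sum (a b c lam al C1 S1 C2 S2 C3 S3 : R) :
  0 < a -> 0 < c -> c < a -> c^2 = a^2 - b^2 -> 0 < al -> al < a -> al^2 = a^2 - lam ->
  c^2*(al^2 - 2*a*al) = a^4 - 2*a^3*al ->
  0 < tc1 a b lam -> 0 < tc2 a b lam -> 0 < tc3 a b lam ->
  C1^2 + S1^2 = 1 -> C2^2 + S2^2 = 1 -> C3^2 + S3^2 = 1 ->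
  tangency a b lam C1 S1 C2 S2 = 0 -> tangency a b lam C1 S1 C3 S3 = 0 ->
  0 < gap C2 S2 C3 S3 ->
  1/(a - c*C1) + 1/(a - c*C2) + 1/(a - c*C3)
  = (3 + 2*lam*(c^2/tc1 a b lam + a^2/tc3 a b lam))/(2*a).
Proof.
  intros Ha Hc Hca Hcb Hal Hala Hlam Hax Hh1 Hh2 Hh3 H1 H2 H3 T12 T13 G23.
  assert (Hd : forall C S, C^2 + S^2 = 1 -> 0 < a - c*C) by (intros; nra).
  pose proof (Hd C1 S1 H1) as Hd1. pose proof (Hd C2 S2 H2) as Hd2. pose proof (Hd C3 S3 H3) as Hd3.
  unfold tangency in T12, T13.
  assert (HD : al^2 - 2*a*al < 0) by nra.
  assert (HN : a^4 - 2*a^3*al < 0) by (rewrite <- Hax; assert (0 < c^2) by nra; nra).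
  destruct (caustic_elimination a b c lam al Hcb Hlam Hax) as (Ek & E1 & E2 & E3); [lra|].
  set (h1 := tc1 a b lam) in *. set (h2 := tc2 a b lam) in *. set (h3 := tc3 a b lam) in *.
  set (A := h1*C1). set (B := h2*S1). set (n2 := A^2 + B^2).
  assert (Hn2 : 0 < n2) by (apply polar_norm_pos; assumption).
  destruct (line_circle_pair A B h3 C2 S2 C3 S3 Hn2) as (tau & EC2 & ES2 & EC3 & ES3 & Htau);
    try (unfold A, B; lra); try assumption.
  fold n2 in EC2, ES2, EC3, ES3, Htau.
  set (rr := a + c*h3*A/n2). set (s := -c*B). set (sg := (n2 - h3^2)/n2^2) in Htau.
  assert (D2 : a - c*C2 = rr - tau*s) by (rewrite EC2; unfold rr, s; field; lra).
  assert (D3 : a - c*C3 = rr + tau*s) by (rewrite EC3; unfold rr, s; field; lra).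
  assert (Hcore : (rr^2 - sg*s^2) + (a - c*C1)*(2*rr)
      = (3 + 2*(a^2 - al^2)*(c^2/h1 + a^2/h3))/(2*a)*((a - c*C1)*(rr^2 - sg*s^2))).
  { apply (focal_sum_core a al (c*C1) (c^2) h1 h2 h3 (S1^2) n2 sg (s^2) rr);
      try lra; try reflexivity.
    - replace ((c*C1)^2/c^2) with (C1^2) by (field; lra). lra.
    - unfold n2, A, B. field. lra.
    - unfold s, B. ring.
    - unfold rr, A. field. lra. }
  replace lam with (a^2 - al^2) by lra. rewrite <- Htau in Hcore.
  rewrite D2, D3 in *.
  apply (Rmult_eq_reg_r ((a - c*C1)*(rr - tau*s)*(rr + tau*s))).
  - transitivity ((rr^2 - tau^2*s^2) + (a - c*C1)*(2*rr)); [field; repeat split; lra|].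
    rewrite Hcore. ring.
  - repeat apply Rmult_integral_contrapositive_currified; lra.
Qed.

Lemma inversion_dist (f : pt) (rho : R) (P P' : pt) :
  0 < dot (vsub P f) (vsub P f) -> 0 < dot (vsub P' f) (vsub P' f) ->
  dot (vsub (invert f rho P) (invert f rho P')) (vsub (invert f rho P) (invert f rho P'))
  = rho^4 * dot (vsub P P') (vsub P P')
    / (dot (vsub P f) (vsub P f) * dot (vsub P' f) (vsub P' f)).
Proof.
  destruct f as [f1 f2], P as [x1 y1], P' as [x2 y2].
  unfold invert, dot, vsub, vadd, vscale. cbn [fst snd]. intros H1 H2.
  field. lra.
Qed.

Lemma focal_dist (a b c C S : R) : c^2 = a^2 - b^2 -> C^2 + S^2 = 1 ->
  dot (vsub (a*C, b*S) (-c, 0)) (vsub (a*C, b*S) (-c, 0)) = (a + c*C)^2.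
Proof. intros Hc H. unfold dot, vsub. cbn [fst snd]. nsatz_pow. Qed.

Lemma inversive_side (a b c rho lam Ci Si Cj Sj dk G : R) :
  0 < a -> 0 < b -> c^2 = a^2 - b^2 -> 0 < c -> c < a ->
  Ci^2 + Si^2 = 1 -> Cj^2 + Sj^2 = 1 -> 0 < lam -> tangency a b lam Ci Si Cj Sj = 0 ->
  G*dk^2 = rho^4*a^2*b^2/(lam*(a + c*Ci)^2*(a + c*Cj)^2) ->
  dot (vsub (invert (-c, 0) rho (a*Ci, b*Si)) (invert (-c, 0) rho (a*Cj, b*Sj)))
      (vsub (invert (-c, 0) rho (a*Ci, b*Si)) (invert (-c, 0) rho (a*Cj, b*Sj)))
  = G*(gap Ci Si Cj Sj * dk)^2.
Proof.
  intros Ha Hb Hc Hc0 Hca Hi Hj Hl T HG.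
  assert (0 < a + c*Ci /\ 0 < a + c*Cj) as [Hdi Hdj] by (split; nra).
  rewrite inversion_dist, !(focal_dist a b c) by (rewrite ?(focal_dist a b c); try apply pow_lt; assumption).
  (* tangency: |Pi Pj|^2 = gap * weight = a^2 b^2 gap^2 / lam *)
  rewrite (chord_sq a b Cj Sj Ci Si Hj Hi), gap_sym, weight_sym.
  rewrite tangency_eq in T.
  replace (weight a b Ci Si Cj Sj) with (a^2*b^2*gap Ci Si Cj Sj/lam)
    by (apply (Rmult_eq_reg_l lam); [field_simplify; lra | lra]).
  replace (G*(gap Ci Si Cj Sj*dk)^2) with ((G*dk^2)*gap Ci Si Cj Sj^2) by ring.
  rewrite HG. field. repeat split; lra.
Qed.

(* Cauchy-Schwarz: the argument of acos in [angle_at] lies in [-1, 1]. *)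
Lemma cos_angle_bound (u v : pt) : 0 < dot u u -> 0 < dot v v ->
  -1 <= dot u v / (vnorm u * vnorm v) <= 1.
Proof.
  intros Hu Hv. unfold vnorm.
  assert (Hnu : 0 < sqrt (dot u u)) by (apply sqrt_lt_R0; assumption).
  assert (Hnv : 0 < sqrt (dot v v)) by (apply sqrt_lt_R0; assumption).
  assert (Hsq : (sqrt (dot u u) * sqrt (dot v v))^2 = dot u u * dot v v)
    by (rewrite Rpow_mult_distr, !pow2_sqrt; lra).
  assert (CS : (dot u v)^2 <= dot u u * dot v v).
  { destruct u as [u1 u2], v as [v1 v2]. unfold dot. cbn [fst snd].
    pose proof (pow2_ge_0 (u1*v2 - u2*v1)). nra. }
  set (n := sqrt (dot u u) * sqrt (dot v v)) in *.
  assert (Hn : 0 < n) by (apply Rmult_lt_0_compat; assumption).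
  assert (Habs : -n <= dot u v <= n) by (split; nra).
  split; apply (Rmult_le_reg_r n); try assumption; field_simplify; lra.
Qed.

Lemma cos_angle_from_sides (p q r : pt) (G X Y Z : R) : 0 < G -> 0 < X -> 0 < Y ->
  dot (vsub q p) (vsub q p) = G*X^2 -> dot (vsub r p) (vsub r p) = G*Y^2 ->
  dot (vsub q r) (vsub q r) = G*Z^2 ->
  cos (angle_at q p r) = (X^2 + Y^2 - Z^2)/(2*X*Y).
Proof.
  intros HG HX HY Hq Hr Hqr. unfold angle_at.
  rewrite cos_acos
    by (apply cos_angle_bound; rewrite ?Hq, ?Hr; apply Rmult_lt_0_compat; try apply pow_lt; lra).
  assert (Hd : dot (vsub q p) (vsub r p) = (G*X^2 + G*Y^2 - G*Z^2)/2).
  { rewrite <- Hq, <- Hr, <- Hqr. destruct p, q, r. unfold dot, vsub. cbn [fst snd]. field. }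
  unfold vnorm. rewrite Hd, Hq, Hr.
  rewrite !sqrt_mult, !sqrt_pow2 by (try apply pow2_ge_0; lra).
  replace (sqrt G * X * (sqrt G * Y)) with ((sqrt G * sqrt G) * (X * Y)) by ring.
  rewrite sqrt_sqrt by lra.
  field. lra.
Qed.

Lemma inversive_cos_vertex (a b c rho lam al C1 S1 C2 S2 C3 S3 : R) :
  0 < a -> 0 < b -> c^2 = a^2 - b^2 -> 0 < c -> c < a -> 0 < rho -> 0 < lam ->
  0 < al -> al < a -> al^2 = a^2 - lam -> c^2*(al^2 - 2*a*al) = a^4 - 2*a^3*al ->
  0 < tc1 a b lam -> 0 < tc2 a b lam -> 0 < tc3 a b lam ->
  caustic_triangle a b lam C1 S1 C2 S2 C3 S3 ->
  let Q1 := invert (-c, 0) rho (a*C1, b*S1) in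
  let Q2 := invert (-c, 0) rho (a*C2, b*S2) in
  let Q3 := invert (-c, 0) rho (a*C3, b*S3) in
  cos (angle_at Q3 Q1 Q2) = (a*(a - c*C1) - lam)/(al*(a - c*C1)).
Proof.
  intros Ha Hb Hcb Hc Hca Hrho Hl Hal Hala Hlam Hax Hh1 Hh2 Hh3
    (H1 & H2 & H3 & T12 & T23 & T31 & G12 & G23 & G31) Q1 Q2 Q3.
  assert (Hd : forall C S, C^2 + S^2 = 1 -> 0 < a + c*C /\ 0 < a - c*C) by (intros; split; nra).
  destruct (Hd C1 S1 H1) as [Hp1 Hm1]. destruct (Hd C2 S2 H2) as [Hp2 _].
  destruct (Hd C3 S3 H3) as [Hp3 _].
  rewrite gap_sym in G31. rewrite tangency_sym in T31.
  (* all sides of the inversive triangle are proportional to L_k = gap_ij (a + c C_k) *)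
  set (G := rho^4*a^2*b^2/(lam*(a + c*C1)^2*(a + c*C2)^2*(a + c*C3)^2)).
  assert (HG : 0 < G).
  { unfold G. apply Rdiv_lt_0_compat; repeat apply Rmult_lt_0_compat; try apply pow_lt; lra. }
  set (L1 := gap C2 S2 C3 S3 * (a + c*C1)).
  set (L2 := gap C1 S1 C3 S3 * (a + c*C2)).
  set (L3 := gap C1 S1 C2 S2 * (a + c*C3)).
  assert (HL2 : 0 < L2) by (apply Rmult_lt_0_compat; assumption).
  assert (HL3 : 0 < L3) by (apply Rmult_lt_0_compat; assumption).
  assert (D31 : dot (vsub Q3 Q1) (vsub Q3 Q1) = G*L2^2).
  { unfold L2. rewrite gap_sym.
    apply (inversive_side a b c rho lam C3 S3 C1 S1); try assumption.
    - rewrite tangency_sym. assumption.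
    - unfold G. field. repeat split; lra. }
  assert (D21 : dot (vsub Q2 Q1) (vsub Q2 Q1) = G*L3^2).
  { unfold L3. rewrite gap_sym.
    apply (inversive_side a b c rho lam C2 S2 C1 S1); try assumption.
    - rewrite tangency_sym. assumption.
    - unfold G. field. repeat split; lra. }
  assert (D32 : dot (vsub Q3 Q2) (vsub Q3 Q2) = G*L1^2).
  { unfold L1. rewrite gap_sym.
    apply (inversive_side a b c rho lam C3 S3 C2 S2); try assumption.
    - rewrite tangency_sym. assumption.
    - unfold G. field. repeat split; lra. }
  rewrite (cos_angle_from_sides _ _ _ G L2 L3 L1 HG HL2 HL3 D31 D21 D32).
  pose proof (vertex_cosine a b c lam al C1 S1 C2 S2 C3 S3 Ha Hc Hcb Hal Hala Hlam Hax
                Hh1 Hh2 Hh3 H1 H2 H3 T12 T31 G23) as V.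
  fold L1 L2 L3 in V.
  apply (Rmult_eq_reg_r (2*L2*L3*(al*(a - c*C1)))).
  - transitivity (al*(a - c*C1)*(L2^2 + L3^2 - L1^2)); [field; lra|].
    rewrite V. field. split; lra.
  - repeat apply Rmult_integral_contrapositive_currified; lra.
Qed.

Lemma cos_sum_value (a b d lam : R) : 0 < b -> b < a -> d^2 = a^4 - a^2*b^2 + b^4 ->
  lam = a^2*b^2*(2*d - a^2 - b^2)/(a^2 - b^2)^2 ->
  tc1 a b lam <> 0 -> tc3 a b lam <> 0 -> d - b^2 <> 0 ->
  (3*a - lam*((3 + 2*lam*((a^2 - b^2)/tc1 a b lam + a^2/tc3 a b lam))/(2*a)))
    / (a*(d - b^2)/(a^2 - b^2))
  = d*(a^2 + (a^2 - b^2) - d)/(a^2*(a^2 - b^2)).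
Proof.
  intros Hb Hba Hd2 -> H1 H3 Hdb.
  assert (Hab : a^2 - b^2 <> 0) by nra.
  unfold tc1, tc3 in *.
  field_simplify_eq; [nsatz_pow|].
  repeat split; try assumption; try lra.
  - apply (ne0_of_quotient _ _ ((a^2 - b^2)^2) H3); [apply pow_nonzero|field]; assumption.
  - apply (ne0_of_quotient _ _ (a^2 - b^2) H1); [|field]; assumption.
Qed.

Lemma inversive_cos_sum (a b c d rho lam C1 S1 C2 S2 C3 S3 : R) :
  0 < b -> b < a -> c^2 = a^2 - b^2 -> 0 < c -> 0 < d -> d^2 = a^4 - a^2*b^2 + b^4 ->
  0 < rho -> 0 < lam -> caustic_triangle a b lam C1 S1 C2 S2 C3 S3 ->
  let Q1 := invert (-c, 0) rho (a*C1, b*S1) in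
  let Q2 := invert (-c, 0) rho (a*C2, b*S2) in
  let Q3 := invert (-c, 0) rho (a*C3, b*S3) in
  cos (angle_at Q3 Q1 Q2) + cos (angle_at Q1 Q2 Q3) + cos (angle_at Q2 Q3 Q1)
  = d*(a^2 + c^2 - d)/(a^2*c^2).
Proof.
  intros Hb Hba Hcb Hc Hd Hd2 Hrho Hl Htri Q1 Q2 Q3.
  assert (Ha : 0 < a) by lra. assert (Hca : c < a) by nra.
  pose proof (caustic_parameter a b d lam C1 S1 C2 S2 C3 S3 Hb Hba Hd Hd2 Hl Htri) as Hlam.
  destruct (caustic_axis a b d lam Hb Hba Hd Hd2 Hlam) as (Hal & Hala & Hal2 & Hax).
  destruct (caustic_coef_pos a b d lam Hb Hba Hd Hd2 Hl Hlam) as (Hh1 & Hh2 & Hh3).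
  destruct (delta_bounds a b d Hb Hba Hd Hd2) as [Hdb _].
  set (al := a*(d - b^2)/(a^2 - b^2)) in *. rewrite <- Hcb in Hax.
  pose proof (caustic_triangle_rotate _ _ _ _ _ _ _ _ _ Htri) as Htri2.
  pose proof (caustic_triangle_rotate _ _ _ _ _ _ _ _ _ Htri2) as Htri3.
  unfold Q1, Q2, Q3.
  rewrite (inversive_cos_vertex a b c rho lam al C1 S1 C2 S2 C3 S3),
          (inversive_cos_vertex a b c rho lam al C2 S2 C3 S3 C1 S1),
          (inversive_cos_vertex a b c rho lam al C3 S3 C1 S1 C2 S2) by assumption.
  destruct Htri as (H1 & H2 & H3 & T12 & _ & T31 & _ & G23 & _).
  rewrite tangency_sym in T31.
  assert (Hm : forall C S, C^2 + S^2 = 1 -> 0 < a - c*C) by (intros; nra).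
  pose proof (Hm C1 S1 H1). pose proof (Hm C2 S2 H2). pose proof (Hm C3 S3 H3).
  (* each cosine is (a - lam/(a - c C_i))/al, and the reciprocals sum to a constant *)
  replace ((a*(a - c*C1) - lam)/(al*(a - c*C1)) + (a*(a - c*C2) - lam)/(al*(a - c*C2))
           + (a*(a - c*C3) - lam)/(al*(a - c*C3)))
    with ((3*a - lam*(1/(a - c*C1) + 1/(a - c*C2) + 1/(a - c*C3)))/al)
    by (field; repeat split; lra).
  rewrite (focal_reciprocal_sum a b c lam al C1 S1 C2 S2 C3 S3) by assumption.
  unfold al. rewrite Hcb.
  apply cos_sum_value; try assumption; try lra.
  apply (Rmult_eq_reg_l ((a^2 - b^2)^2)); [|apply pow_nonzero; nra].
  rewrite Hlam. field. nra.
Qed.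

Theorem mainTheorem12 (a b rho : R) (P1 P2 P3 : pt) :
  0 < b -> b < a -> 0 < rho ->
  three_periodic a b P1 P2 P3 ->
  let c := sqrt (a^2 - b^2) in
  let f1 := (- c, 0) in
  let Q1 := invert f1 rho P1 in
  let Q2 := invert f1 rho P2 in
  let Q3 := invert f1 rho P3 in
  let delta := sqrt (a^4 - a^2 * b^2 + b^4) in
  cos (angle_at Q3 Q1 Q2) + cos (angle_at Q1 Q2 Q3) + cos (angle_at Q2 Q3 Q1)
  = delta * (a^2 + c^2 - delta) / (a^2 * c^2).
Proof.
  intros Hb Hba Hrho (E1 & E2 & E3 & N12 & N23 & N31 & B1 & B2 & _).
  assert (Ha : 0 < a) by lra.
  destruct P1 as [x1 y1], P2 as [x2 y2], P3 as [x3 y3].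
  unfold on_ellipse in E1, E2, E3. cbn [fst snd] in E1, E2, E3.
  destruct (ellipse_param a b x1 y1 Ha Hb E1) as (C1 & S1 & -> & -> & H1).
  destruct (ellipse_param a b x2 y2 Ha Hb E2) as (C2 & S2 & -> & -> & H2).
  destruct (ellipse_param a b x3 y3 Ha Hb E3) as (C3 & S3 & -> & -> & H3).
  intros c f1 Q1 Q2 Q3 delta.
  assert (Hcb : c^2 = a^2 - b^2) by (unfold c; rewrite pow2_sqrt; nra).
  assert (Hc : 0 < c) by (unfold c; apply sqrt_lt_R0; nra).
  assert (Hd4 : 0 < a^4 - a^2*b^2 + b^4).
  { assert (0 < a^2*(a^2 - b^2)) by (apply Rmult_lt_0_compat; nra).
    assert (0 < b^4) by (apply pow_lt; lra). nra. }
  assert (Hd2 : delta^2 = a^4 - a^2*b^2 + b^4) by (unfold delta; rewrite pow2_sqrt; lra).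
  assert (Hd : 0 < delta) by (unfold delta; apply sqrt_lt_R0; lra).
  assert (Hgap : forall C S C' S', C^2 + S^2 = 1 -> C'^2 + S'^2 = 1 ->
            (a*C, b*S) <> (a*C', b*S') -> 0 < gap C S C' S').
  { intros C S C' S' HC HC' N. apply gap_pos; try assumption.
    intro E. apply N. injection E as -> ->. reflexivity. }
  destruct (common_caustic a b C1 S1 C2 S2 C3 S3 Ha Hb H1 H2 H3
              (Hgap _ _ _ _ H1 H2 N12) (Hgap _ _ _ _ H2 H3 N23) (Hgap _ _ _ _ H3 H1 N31) B1 B2)
    as (lam & Hl & Htri).
  exact (inversive_cos_sum a b c delta rho lam C1 S1 C2 S2 C3 S3
           Hb Hba Hcb Hc Hd Hd2 Hrho Hl Htri).
Qed.
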